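(* Fix an integer $\ell\ge2$ and a real $p\in(0,1)$, and let $X$ be the number of derangements of $G_{k,\ell}(m)$. Then, as $k\to\infty$, \[ \mathbb{E}[X]\sim (k!)^\ell\, p^{k\ell}\exp\left\{\frac{\ell}{2}\left(1-\frac1p\right)\right\}. \]
   Context: For integers $k\ge1$, $\ell\ge2$, $D_{k,\ell}$ is the digraph with vertex set $\{v_{i,j}: i\in[k], j\in[\ell]\}$ in which $(v_{i,j},v_{i',j'})$ is an arc if and only if $j'\equiv j+1 \pmod \ell$ (the blow-up of a directed $\ell$-cycle, each vertex replaced by $k$ vertices); it has $k^2\ell$ arcs. Given $p\in(0,1)$, let $m=\lfloor pk^2\ell\rfloor$ and let $G_{k,\ell}(m)$ be a spanning subgraph of $D_{k,\ell}$ (same vertex set) chosen uniformly at random among those with exactly $m$ arcs. A permutation in a digraph $G=(V,E)$ is a bijection $f:V\to V$ such that for every $v$ either $f(v)=v$ or $(v,f(v))\in E$; a derangement is a permutation fixing no vertex. Asymptotics are as $k\to\infty$ with $\ell,p$ fixed; $A\sim B$ means $A/B\to1$. *)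

From HB Require Import structures.
From mathcomp Require Import all_boot all_order all_algebra all_fingroup.
From mathcomp Require Import all_classical all_reals all_analysis.
Set Implicit Arguments. Unset Strict Implicit. Unset Printing Implicit Defensive.
Import Order.TTheory GRing.Theory Num.Theory.
Local Open Scope ring_scope.

(* Vertices of D_{k,l}: v_{i,j} encoded as (i, j) : 'I_k * 'I_l (0-indexed). *)
Definition vtx (k l : nat) : finType := ('I_k * 'I_l)%type.

Definition dkl_arc (k l : nat) (u v : vtx k l) : bool :=
  (nat_of_ord v.2 == (u.2.+1 %% l))%N.

Definition dkl_arcs (k l : nat) : {set (vtx k l * vtx k l)} :=
  [set e | dkl_arc e.1 e.2].

Definition is_digraph_perm (V : finType) (E : {set (V * V)}) (f : {perm V}) : bool :=
  [forall v, (f v == v) || ((v, f v) \in E)].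

Definition is_derangement (V : finType) (E : {set (V * V)}) (f : {perm V}) : bool :=
  is_digraph_perm E f && [forall v, f v != v].

Definition num_derangements (V : finType) (E : {set (V * V)}) : nat :=
  #|[set f : {perm V} | is_derangement E f]|.

(* Spanning subgraphs of D_{k,l} with exactly m arcs (sample space of G_{k,l}(m)). *)
Definition subgraphs_m (k l m : nat) : {set {set (vtx k l * vtx k l)}} :=
  [set S : {set (vtx k l * vtx k l)} | (S \subset dkl_arcs k l) && (#|S| == m)%N].

Definition m_of (R : realType) (p : R) (k l : nat) : nat :=
  Num.truncn (p * ((k ^ 2 * l)%N)%:R).

Definition expected_derangements (R : realType) (p : R) (k l : nat) : R :=
  (\sum_(S in subgraphs_m k l (m_of p k l)) (num_derangements S)%:R)
  / (#|subgraphs_m k l (m_of p k l)|)%:R.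

(* As [D_{k,l}] is loopless, a derangement of a subgraph [S] is
   a permutation [f] whose arc set [E_f = {(v, f v)}] lies in [S].  Every arc
   goes from a layer to the next, so the derangements of [D_{k,l}] are the
   [(k!)^l] layer shifts, each with [n = kl] arcs.  Double counting gives, with
   [N = k² l] arcs in total,
     E[X] = (k!)^l C(N - n, m - n) / C(N, m) = (k!)^l ∏_{i<n} (m - i)/(N - i).  With [θ = pN - m ∈ [0,1)], the factors [y_i = (m-i)/(p(N-i))]
   satisfy [1 - 1/y_i <= ln y_i <= y_i - 1], whence
     exp(-D/(m - n)) <= E[X] / ((k!)^l p^n) <= exp(-D/(pN)),
   [D = nθ + (1 - p) n(n-1)/2], and both exponents equal (l/2)(1 - 1/p)
   up to [O(1/k)].  The theorem follows by squeezing. *)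

From HB Require Import structures.
From mathcomp Require Import all_boot all_order all_algebra all_fingroup.
From mathcomp Require Import all_classical all_reals all_analysis.
From mathcomp Require Import ring lra zify.
(* Re-imported last, so that the lemmas on finite sets take precedence over
   their homonyms on classical sets. *)
Import mathcomp.boot.fintype mathcomp.boot.finset.
Import numFieldNormedType.Exports.
Import Order.TTheory GRing.Theory Num.Theory.

Set Implicit Arguments.
Unset Strict Implicit.
Unset Printing Implicit Defensive.

(* A set [S] of size [m] containing a fixed [E ⊆ A] is [E] plus an
   ([m - |E|])-subset of [A :\: E]; hence the binomial count. *)
Lemma card_supsets (T : finType) (A E : {set T}) (m : nat) :
  E \subset A -> #|E| <= m ->
  #|[set S : {set T} | (S \subset A) && (#|S| == m) && (E \subset S)]|
  = 'C(#|A| - #|E|, m - #|E|).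
Proof.
move=> EA Em; rewrite -cardsDS // -cards_draws.
set D := [set B : {set T} | B \subset A :\: E & #|B| == m - #|E|].
have addE_inj : {in D &, injective (fun B => B :|: E)}.
  move=> B1 B2; rewrite !inE => /andP[/subsetP B1s _] /andP[/subsetP B2s _] eq12.
  apply/setP=> x; have := congr1 (fun S : {set T} => x \in S) eq12; rewrite /= !inE.
  case: (boolP (x \in E)) => xE; last by rewrite !orbF.
  have := B1s x; have := B2s x; rewrite !inE xE /=.
  by case: (x \in B1); case: (x \in B2) => // _ ->.
rewrite -(card_in_imset addE_inj); apply: eq_card => S; rewrite !inE.
apply/idP/imsetP => [/andP[/andP[SA /eqP Sm] ES] | [B]].
  exists (S :\: E); first by rewrite inE setSD //= cardsDS // Sm.
  apply/setP=> x; rewrite !inE; case: (boolP (x \in E)) => xE /=; last by rewrite orbF.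
  by rewrite (subsetP ES) // orbT.
rewrite inE => /andP[BAE /eqP BS] ->.
have BA : B \subset A by apply: subset_trans BAE (subsetDl _ _).
have BE0 : B :&: E = set0.
  apply/setP=> x; rewrite !inE; apply/negbTE/negP => /andP[xB xE].
  by have := subsetP BAE x xB; rewrite !inE xE.
by rewrite subUset BA EA subsetUr cardsU BE0 cards0 subn0 BS subnK ?eqxx.
Qed.

Section BlownUpCycle.
Variables (k l : nat).
Local Notation V := (vtx k l).
Local Notation A := (dkl_arcs k l).

Definition perm_arcs (f : {perm V}) : {set V * V} := (fun v => (v, f v)) @: setT.

Lemma card_perm_arcs (f : {perm V}) : #|perm_arcs f| = k * l.
Proof. by rewrite card_imset ?cardsT ?card_prod ?card_ord // => u v []. Qed.

(* Each arc is determined by its tail [(i, j)] and the layer index of its head. *)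
Lemma card_dkl_arcs : #|A| = k * k * l.
Proof.
pose arc (x : V * 'I_k) : V * V := (x.1, (x.2, ordS x.1.2)).
have arc_inj : injective arc by move=> [x1 x2] [y1 y2] [-> ->].
have -> : A = arc @: setT.
  apply/setP=> [[u [i j]]]; rewrite inE /dkl_arc /=; apply/idP/imsetP.
    move=> /eqP h; exists (u, i); rewrite ?in_setT // /arc /=.
    by do 2 f_equal; apply: val_inj; rewrite /= h.
  by move=> [[x1 x2] _ [eu ei ej]]; subst; exact: eqxx.
by rewrite (card_imset _ arc_inj) cardsT !card_prod !card_ord mulnC mulnA.
Qed.

Definition layer_shift_fun (s : {ffun 'I_l -> {perm 'I_k}}) (v : V) : V :=
  (s v.2 v.1, ordS v.2).

Lemma layer_shift_inj (s : {ffun 'I_l -> {perm 'I_k}}) : injective (layer_shift_fun s).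
Proof.
move=> [u1 u2] [v1 v2] e.
have [e1 e2] : (s u2 u1, ordS u2) = (s v2 v1, ordS v2) :> V := e.
have u2v2 : u2 = v2 by apply: (can_inj (@ordSK l)); apply: val_inj.
by subst v2; rewrite (perm_inj e1).
Qed.

Definition layer_shift (s : {ffun 'I_l -> {perm 'I_k}}) : {perm V} :=
  perm (@layer_shift_inj s).

Hypothesis l_gt1 : 1 < l.

Lemma dkl_arc_neq (u v : V) : dkl_arc u v -> u != v.
Proof.
rewrite /dkl_arc => /eqP h; apply/negP => /eqP uv; subst v.
have lt := ltn_ord u.2; move: h lt l_gt1; set a := nat_of_ord u.2.
case: (ltngtP a.+1 l) => c.
- by rewrite modn_small //; lia.
- lia.
- by rewrite c modnn; lia.
Qed.

Lemma derangementE (S : {set V * V}) (f : {perm V}) : S \subset A ->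
  is_derangement S f = (perm_arcs f \subset S).
Proof.
move=> SA; rewrite /is_derangement /is_digraph_perm.
apply/andP/subsetP => [[/forallP h1 /forallP h2] e /imsetP[v _ ->] | h].
  by have := h1 v; rewrite (negbTE (h2 v)).
have hv v : (v, f v) \in S by apply: h; apply: imset_f.
have hn v : f v != v.
  by have := subsetP SA _ (hv v); rewrite inE /= => /dkl_arc_neq; rewrite eq_sym.
by split; apply/forallP => v; [rewrite hv orbT | exact: hn v].
Qed.

Lemma derangement_subgraph (S : {set V * V}) (f : {perm V}) : S \subset A ->
  is_derangement S f = is_derangement A f && (perm_arcs f \subset S).
Proof.
move=> SA; rewrite !derangementE //.
by apply/idP/andP => [h|[]//]; split => //; apply: subset_trans h SA.
Qed.

(* A derangement of [D_{k,l}] maps each layer bijectively onto the next one,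
   so the derangements are exactly the [layer_shift s]: there are [(k!)^l]. *)
Lemma card_dkl_derangements :
  #|[set f : {perm V} | is_derangement A f]| = (k`!) ^ l.
Proof.
have shift_inj : injective layer_shift.
  move=> s t h; apply/ffunP => j; apply/permP => i.
  by have := congr1 (fun f : {perm V} => (f (i, j)).1) h; rewrite /= !permE.
have -> : [set f : {perm V} | is_derangement A f] = layer_shift @: setT.
  apply/setP => f; rewrite inE derangementE //; apply/idP/imsetP; last first.
    move=> [s _ ->]; apply/subsetP => e /imsetP[v _ ->].
    by rewrite inE /dkl_arc /= permE.
  move=> /subsetP h.
  have hv v : dkl_arc v (f v) by have := h _ (imset_f _ (in_setT v)); rewrite inE.
  have layer_inj j : injective (fun i => (f (i, j)).1).
    move=> i i' e; suff : (i, j) = (i', j) by case.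
    apply: (@perm_inj _ f); move: e (hv (i, j)) (hv (i', j)); rewrite /dkl_arc.
    case: (f (i, j)) => a b; case: (f (i', j)) => a' b' /= -> /eqP hb /eqP hb'.
    by congr pair; apply/eqP; rewrite -val_eqE /= hb hb'.
  exists [ffun j => perm (layer_inj j)] => //.
  apply/permP => [[i j]]; rewrite permE /layer_shift_fun /= ffunE permE.
  have := hv (i, j); rewrite /dkl_arc /= => /eqP e.
  by case: (f (i, j)) e => a b /= e; congr (_, _); apply: val_inj; rewrite /= e.
by rewrite card_imset // cardsT card_ffun card_ord card_Sn.
Qed.

End BlownUpCycle.

(* Double counting the pairs (derangement [f] of [D_{k,l}], [m]-subgraph [S ⊇ E_f]):
   each of the [(k!)^l] derangements has [kl] arcs, which lie in
   [C(k²l - kl, m - kl)] of the [m]-subgraphs. *)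
Lemma sum_num_derangements (k l m : nat) : 1 < l -> k * l <= m ->
  \sum_(S in subgraphs_m k l m) num_derangements S
  = k`! ^ l * 'C(k * k * l - k * l, m - k * l).
Proof.
move=> l_gt1 klm.
transitivity (\sum_(S in subgraphs_m k l m) \sum_(f : {perm vtx k l} |
    is_derangement (dkl_arcs k l) f && (perm_arcs f \subset S)) 1).
  apply: eq_bigr => S; rewrite inE => /andP[SA _].
  rewrite /num_derangements -sum1_card; apply: eq_bigl => f.
  by rewrite inE derangement_subgraph.
rewrite (exchange_big_dep predT) //=.
rewrite -(card_dkl_derangements k l_gt1) -sum_nat_const [RHS]big_mkcond /=.
apply: eq_bigr => f _; rewrite inE; case: ifP => df; last first.
  by rewrite big1 // => S; rewrite andbF.
rewrite -(card_perm_arcs f) -card_dkl_arcs -card_supsets; last 2 first.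
- by rewrite -derangementE.
- by rewrite card_perm_arcs.
by rewrite -sum1_card; apply: eq_bigl => S; rewrite !inE.
Qed.

Local Open Scope classical_set_scope.
Local Open Scope ring_scope.

Lemma bin_ffact_swap (N m n : nat) : (n <= m)%N -> (m <= N)%N ->
  ('C(N - n, m - n) * N ^_ n = 'C(N, m) * m ^_ n)%N.
Proof.
move=> nm mN.
have fact_N := bin_fact mN.
have fact_Nn : ('C(N - n, m - n) * ((m - n)`! * (N - m)`!) = (N - n)`!)%N.
  have e : (N - n - (m - n) = N - m)%N by lia.
  by rewrite -e bin_fact //; lia.
have ffact_m := ffact_fact nm.
have ffact_N := ffact_fact (leq_trans nm mN).
have X0 : (0 < (m - n)`! * (N - m)`! * (N - n)`!)%N by rewrite !muln_gt0 !fact_gt0.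
apply/eqP; rewrite -(eqn_pmul2r X0); apply/eqP.
transitivity (('C(N - n, m - n) * ((m - n)`! * (N - m)`!)) * (N ^_ n * (N - n)`!))%N.
  by ring.
by rewrite fact_Nn ffact_N -fact_N -ffact_m; ring.
Qed.

Lemma binomial_ratio (R : numFieldType) (N m n : nat) : (n <= m)%N -> (m <= N)%N ->
  ('C(N - n, m - n)%:R / 'C(N, m)%:R : R)
  = \prod_(i < n) ((m - i)%N%:R / (N - i)%N%:R).
Proof.
move=> nm mN; rewrite prodf_div -!natr_prod -!ffact_prod.
have C0 : (0 < 'C(N, m))%N by rewrite bin_gt0.
have b0 : (0 < N ^_ n)%N by rewrite ffact_gt0 (leq_trans nm mN).
apply/eqP; rewrite eqr_div ?pnatr_eq0 -?lt0n // -!natrM eqr_nat.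
by rewrite bin_ffact_swap // mulnC.
Qed.

(* The total defect [n θ + (1 - p) n (n - 1) / 2] of [n] factors of the binomial
   ratio, where [θ = pN - m] measures the rounding of [m = ⌊pN⌋]. *)
Definition defect (R : fieldType) (p n th : R) : R :=
  n * th + (1 - p) * (n * (n - 1) / 2).

Section ProductBounds.
Variable R : realType.

Lemma expR_log_bounds (y : R) : 0 < y -> expR (1 - y^-1) <= y <= expR (y - 1).
Proof.
move=> y0; apply/andP; split; last first.
  by have := expR_ge1Dx (y - 1); rewrite addrC subrK.
have h := expR_ge1Dx (y^-1 - 1); rewrite addrC subrK in h.
have : expR (1 - y^-1) * y^-1 <= expR (1 - y^-1) * expR (y^-1 - 1).
  by rewrite ler_pM2l ?expR_gt0.
rewrite -expRD (_ : 1 - y^-1 + (y^-1 - 1) = 0); last by ring.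
rewrite expR0 => h2.
have : expR (1 - y^-1) * y^-1 * y <= y by rewrite -[X in _ <= X]mul1r ler_pM2r.
by rewrite -mulrA mulVf ?mulr1 // gt_eqF.
Qed.

Lemma sumr_ord_natr (n : nat) : \sum_(i < n) (i%:R : R) = n%:R * (n%:R - 1) / 2.
Proof.
elim: n => [|n IH]; first by rewrite big_ord0 mul0r mul0r.
by rewrite big_ord_recr /= IH -addn1 natrD; field.
Qed.

Lemma ler_Ndiv (d a b : R) : 0 <= d -> 0 < a -> a <= b -> - d / a <= - d / b.
Proof.
move=> d0 a0 ab; rewrite !mulNr lerN2; apply: ler_wpM2l => //.
by rewrite lef_pV2 ?inE ?posrE ?(lt_le_trans a0 ab).
Qed.

(* The [i]-th normalized factor [y_i = (m - i) / (p (N - i))] satisfies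
   [1 - 1/y_i = -d_i/(m - i)] and [y_i - 1 = -d_i/(p (N - i))] with
   [d_i = θ + (1 - p) i >= 0]; [expR_log_bounds] then bounds [y_i]
   uniformly in [i < n]. *)
Lemma factor_bounds (p : R) (m N n i : nat) :
  0 < p -> p <= 1 -> (i < n)%N -> (n < m)%N -> (m <= N)%N -> m%:R <= p * N%:R ->
  expR (- ((p * N%:R - m%:R) + (1 - p) * i%:R) / (m%:R - n%:R))
  <= (m - i)%N%:R / (p * (N - i)%N%:R)
  <= expR (- ((p * N%:R - m%:R) + (1 - p) * i%:R) / (p * N%:R)).
Proof.
move=> p0 p1 i_n nm mN mpN.
set d := _ + _.
have d0 : 0 <= d by rewrite addr_ge0 ?subr_ge0 // mulr_ge0 // subr_ge0.
have im : (i <= m)%N by rewrite ltnW // (ltn_trans i_n).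
have mi0 : (0 : R) < (m - i)%N%:R by rewrite ltr0n subn_gt0 (ltn_trans i_n).
have Ni0 : (0 : R) < (N - i)%N%:R.
  by rewrite ltr0n subn_gt0 (leq_trans (ltn_trans i_n nm) mN).
have y0 : 0 < (m - i)%N%:R / (p * (N - i)%N%:R) by rewrite divr_gt0 // mulr_gt0.
have /andP[lo hi] := expR_log_bounds y0; apply/andP; split.
  apply: le_trans lo; rewrite ler_expR.
  have -> : 1 - ((m - i)%N%:R / (p * (N - i)%N%:R))^-1 = - d / (m - i)%N%:R.
    rewrite /d !natrB ?(leq_trans im mN) //; field.
    by rewrite -!natrB ?(leq_trans im mN) // !gt_eqF.
  apply: ler_Ndiv => //; first by rewrite subr_gt0 ltr_nat.
  by rewrite -natrB ?ler_nat ?leq_sub2l // ltnW.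
apply: (le_trans hi); rewrite ler_expR.
have -> : (m - i)%N%:R / (p * (N - i)%N%:R) - 1 = - d / (p * (N - i)%N%:R).
  rewrite /d !natrB ?(leq_trans im mN) //; field.
  by rewrite -!natrB ?(leq_trans im mN) // !gt_eqF.
apply: ler_Ndiv; rewrite ?mulr_gt0 //.
by rewrite ler_wpM2l ?(ltW p0) // ler_nat leq_subr.
Qed.

(* Multiplying the bounds of [factor_bounds] over [i < n]: the exponents add
   up to the total defect. *)
Lemma ratio_bounds (p : R) (m N n : nat) :
  0 < p -> p <= 1 -> (n < m)%N -> (m <= N)%N -> m%:R <= p * N%:R ->
  expR (- defect p n%:R (p * N%:R - m%:R) / (m%:R - n%:R))
  <= (\prod_(i < n) ((m - i)%N%:R / (N - i)%N%:R)) / p ^+ n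
  <= expR (- defect p n%:R (p * N%:R - m%:R) / (p * N%:R)).
Proof.
move=> p0 p1 nm mN mpN.
have sum_d : \sum_(i < n) ((p * N%:R - m%:R) + (1 - p) * i%:R)
    = defect p n%:R (p * N%:R - m%:R).
  rewrite big_split /= sumr_const card_ord -mulr_sumr sumr_ord_natr.
  by rewrite /defect (mulr_natl (p * N%:R - m%:R)).
have -> : (\prod_(i < n) ((m - i)%N%:R / (N - i)%N%:R)) / p ^+ n
    = \prod_(i < n) ((m - i)%N%:R / (p * (N - i)%N%:R)).
  rewrite -[in p ^+ n](card_ord n) -prodr_const -prodf_div; apply: eq_bigr => i _.
  by rewrite invfM [p^-1 * _]mulrC mulrA.
rewrite -sum_d -!sumrN !mulr_suml !expR_sum; apply/andP; split.
  apply: ler_prod => i _; rewrite expR_ge0 /=.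
  by have /andP[] := factor_bounds p0 p1 (ltn_ord i) nm mN mpN.
apply: ler_prod => i _; have /andP[lo ->] := factor_bounds p0 p1 (ltn_ord i) nm mN mpN.
by rewrite (le_trans _ lo) ?expR_ge0.
Qed.

End ProductBounds.

Section ExponentErrors.
Variable R : realFieldType.

Lemma upper_exponent_error (p K L th : R) :
  0 < p -> p < 1 -> 1 <= K -> 2 <= L -> 0 <= th < 1 ->
  `|- defect p (K * L) th / (p * (K * K * L)) - L / 2 * (1 - p^-1)| <= p^-1 / K.
Proof.
move=> p0 p1 K1 L2 /andP[th0 th1].
have pK0 : 0 < p * K by rewrite mulr_gt0 //; lra.
have -> : - defect p (K * L) th / (p * (K * K * L)) - L / 2 * (1 - p^-1)
    = ((1 - p) / 2 - th) / (p * K).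
  by rewrite /defect; field; rewrite ?gt_eqF //; lra.
have -> : p^-1 / K = 1 / (p * K) by rewrite mul1r invfM.
by rewrite normrM normfV (gtr0_norm pK0) ler_pM2r ?invr_gt0 // ler_norml; lra.
Qed.

(* Writing [B] for the upper exponent error and [c = (L/2)(1 - 1/p)], the
   lower exponent is [(B + c) (1 + r) - c] with [r = (θ + n)/(pN - θ - n)]
   and [0 <= r <= 4/(pK)] once [pK >= 4]; this gives an [O(1/K)] error. *)
Lemma lower_exponent_error (p K L th : R) :
  0 < p -> p < 1 -> 1 <= K -> 4 <= p * K -> 2 <= L -> 0 <= th < 1 ->
  `|- defect p (K * L) th / ((p * (K * K * L) - th) - K * L) - L / 2 * (1 - p^-1)|
  <= (p^-1 + 4 * ((L / 2 + 1) / p) / p) / K.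
Proof.
move=> p0 p1 K1 pK4 L2 th01; have /andP[th0 th1] := th01.
have K0 : 0 < K by lra.
have pK0 : 0 < p * K by rewrite mulr_gt0.
set n := K * L; set c := L / 2 * (1 - p^-1).
set B := - defect p n th / (p * (K * K * L)) - c.
have n2 : 2 <= n by rewrite /n; nra.
have hB : `|B| <= p^-1 / K by apply: upper_exponent_error.
have pN : p * (K * K * L) = (p * K) * n by rewrite /n; ring.
have pN4 : 4 * n <= p * (K * K * L) by rewrite pN ler_wpM2r //; lra.
have den0 : 0 < p * (K * K * L) - th - n by lra.
set r := (th + n) / (p * (K * K * L) - th - n).
have -> : - defect p n th / (p * (K * K * L) - th - n) - c = (B + c) * r + B.
  by rewrite /B /r; field; rewrite ?gt_eqF //; lra.
have hc : `|c| <= L / 2 / p.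
  rewrite /c ler0_norm; last first.
    by apply: mulr_ge0_le0; [lra | rewrite subr_le0 invf_ge1 // ltW].
  by rewrite -mulrN opprB ler_wpM2l; lra.
have hBc : `|B + c| <= (L / 2 + 1) / p.
  have hB1 : p^-1 / K <= p^-1 by rewrite ler_pdivrMr // ler_peMr // invr_ge0 ltW.
  have : (L / 2 + 1) / p = L / 2 / p + p^-1 by field; rewrite gt_eqF.
  by have := ler_normD B c; lra.
have r0 : 0 <= r by rewrite divr_ge0 //; lra.
have hr : r <= 4 / (p * K).
  rewrite ler_pdivrMr // mulrAC ler_pdivlMr //.
  have : (th + n) * (p * K) <= 2 * n * (p * K) by rewrite ler_wpM2r ?ltW //; lra.
  have : 2 * n * (p * K) = (p * K * n) / 2 * 4 by field.
  by rewrite -pN; lra.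
have hBcr : `|B + c| * r <= (L / 2 + 1) / p * (4 / (p * K)) by apply: ler_pM.
have : (p^-1 + 4 * ((L / 2 + 1) / p) / p) / K = (L / 2 + 1) / p * (4 / (p * K)) + p^-1 / K.
  by field; rewrite ?gt_eqF //; lra.
by have := ler_normD ((B + c) * r) B; rewrite normrM (ger0_norm r0); lra.
Qed.

End ExponentErrors.

Section Limits.
Variable R : realType.

Lemma cvg0_le_div (u : nat -> R) (C : R) :
  (\forall k \near \oo, `|u k| <= C / k%:R) -> u @ \oo --> (0 : R^o).
Proof.
move=> uC; apply/cvgr0Pnorm_lt => e e0; near=> k.
have hk : C / e + 1 <= k%:R by near: k; exact: nbhs_infty_ger.
have k0 : (0 : R) < k%:R by rewrite ltr0n; near: k; exact: nbhs_infty_gt.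
have hu : `|u k| <= C / k%:R by near: k; exact: uC.
apply: (le_lt_trans hu); rewrite ltr_pdivrMr //.
have : e * (C / e + 1) <= e * k%:R by rewrite ler_pM2l.
have -> : e * (C / e + 1) = C + e by field; rewrite gt_eqF.
lra.
Unshelve. all: by end_near.
Qed.

Lemma cvg_expR0 (u : nat -> R) :
  u @ \oo --> (0 : R^o) -> (fun k => expR (u k)) @ \oo --> (1 : R^o).
Proof. by move=> u0; rewrite -expR0; apply: (cvg_comp u expR u0); exact: continuous_expR. Qed.

End Limits.

Section Expectation.
Variables (R : realType) (l : nat) (p : R).
Hypotheses (l_ge2 : (2 <= l)%N) (p_gt0 : 0 < p) (p_lt1 : p < 1).

(* [D_{k,l}] has [n k] vertices and [N k] arcs; [G_{k,l}(m)] keeps [m k] arcs. *)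
Local Notation n k := (k * l)%N.
Local Notation N k := (k * k * l)%N.
Local Notation m k := (m_of p k l).
Local Notation c := (l%:R / 2 * (1 - p^-1)).

Definition rounding_error (k : nat) : R := p * (N k)%:R - (m k)%:R.

Definition lower_exponent (k : nat) : R :=
  - defect p (n k)%:R (rounding_error k) / ((m k)%:R - (n k)%:R).

Definition upper_exponent (k : nat) : R :=
  - defect p (n k)%:R (rounding_error k) / (p * (N k)%:R).

Lemma rounding_error_bounds (k : nat) : 0 <= rounding_error k < 1.
Proof.
have pN0 : 0 <= p * (N k)%:R by rewrite mulr_ge0 // ltW.
have /andP[lo hi] := truncn_itv pN0.
rewrite /rounding_error /m_of mulnn; apply/andP; split; first by rewrite subr_ge0.
by move: hi; rewrite -natr1; lra.
Qed.

Lemma natr_m (k : nat) : (m k)%:R = p * (N k)%:R - rounding_error k.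
Proof. by rewrite /rounding_error; ring. Qed.

Lemma large_k_sizes (k : nat) : (0 < k)%N -> 4 / p <= k%:R ->
  [/\ 4 <= p * k%:R, (n k < m k)%N, (m k <= N k)%N & (m k)%:R <= p * (N k)%:R].
Proof.
move=> k0 hk.
have K1 : (1 : R) <= k%:R by rewrite ler1n.
have L2 : (2 : R) <= l%:R by rewrite ler_nat.
have pK : 4 <= p * k%:R by rewrite mulrC -ler_pdivrMr.
have /andP[th0 th1] := rounding_error_bounds k.
have n2 : (2 : R) <= k%:R * l%:R by rewrite -[2]mul1r ler_pM.
have pN : p * (N k)%:R = (p * k%:R) * (k%:R * l%:R) by rewrite !natrM; ring.
have pN4 : 4 * (k%:R * l%:R) <= p * (N k)%:R by rewrite pN; nra.
have mpN : (m k)%:R <= p * (N k)%:R by rewrite natr_m; lra.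
split => //.
- by rewrite -(ltr_nat R) natr_m natrM; lra.
- by rewrite -(ler_nat R); apply: (le_trans mpN); rewrite ler_piMl // ltW.
Qed.

Lemma expected_derangementsE (k : nat) : (n k <= m k <= N k)%N ->
  expected_derangements p k l
  = (k`! ^ l)%:R * \prod_(i < n k) ((m k - i)%N%:R / (N k - i)%N%:R).
Proof.
move=> /andP[nm mN].
rewrite /expected_derangements -natr_sum sum_num_derangements //.
by rewrite /subgraphs_m cards_draws card_dkl_arcs natrM -mulrA binomial_ratio.
Qed.

(* Both normalized bounds tend to [1], by the [O(1/k)] exponent errors. *)
Lemma cvg_upper_exponent : (fun k => expR (upper_exponent k - c)) @ \oo --> (1 : R^o).
Proof.
apply/cvg_expR0/(@cvg0_le_div _ _ p^-1); near=> k.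
have K1 : (1 : R) <= k%:R by rewrite ler1n; near: k; exact: nbhs_infty_gt.
have L2 : (2 : R) <= l%:R by rewrite ler_nat.
have := upper_exponent_error p_gt0 p_lt1 K1 L2 (rounding_error_bounds k).
by rewrite /upper_exponent !natrM.
Unshelve. all: by end_near.
Qed.

Lemma cvg_lower_exponent : (fun k => expR (lower_exponent k - c)) @ \oo --> (1 : R^o).
Proof.
apply/cvg_expR0/(@cvg0_le_div _ _ (p^-1 + 4 * ((l%:R / 2 + 1) / p) / p)); near=> k.
have k0 : (0 < k)%N by near: k; exact: nbhs_infty_gt.
have hk : 4 / p <= k%:R by near: k; exact: nbhs_infty_ger.
have K1 : (1 : R) <= k%:R by rewrite ler1n.
have L2 : (2 : R) <= l%:R by rewrite ler_nat.
have [pK _ _ _] := large_k_sizes k0 hk.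
have := lower_exponent_error p_gt0 p_lt1 K1 pK L2 (rounding_error_bounds k).
by rewrite /lower_exponent natr_m !natrM.
Unshelve. all: by end_near.
Qed.

Lemma normalized_expectation_bounds (k : nat) : (0 < k)%N -> 4 / p <= k%:R ->
  expR (lower_exponent k - c)
  <= expected_derangements p k l / ((k`!)%:R ^+ l * p ^+ (k * l) * expR c)
  <= expR (upper_exponent k - c).
Proof.
move=> k0 hk; have [_ nm mN mpN] := large_k_sizes k0 hk.
rewrite expected_derangementsE ?(ltnW nm) ?mN // natrX.
have := ratio_bounds p_gt0 (ltW p_lt1) nm mN mpN.
rewrite -/(rounding_error k) -/(lower_exponent k) -/(upper_exponent k).
set P := \prod_(i < _) _ => /andP[lo hi].
have F0 : (0 : R) < (k`!)%:R ^+ l by rewrite exprn_gt0 // ltr0n fact_gt0.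
have -> : (k`!)%:R ^+ l * P / ((k`!)%:R ^+ l * p ^+ (k * l) * expR c)
    = P / p ^+ (k * l) / expR c.
  by field; rewrite ?gt_eqF ?expR_gt0 ?exprn_gt0.
by rewrite !expRD !expRN !ler_pM2r ?invr_gt0 ?expR_gt0 // lo hi.
Qed.

End Expectation.

Theorem mainTheorem5 (R : realType) (l : nat) (p : R) :
  (2 <= l)%N -> 0 < p -> p < 1 ->
  (fun k : nat => expected_derangements p k l /
     (((k`!)%:R) ^+ l * p ^+ (k * l) * expR ((l%:R / 2) * (1 - p^-1))))
    @ \oo --> (1 : R^o).
Proof.
move=> l_ge2 p_gt0 p_lt1.
apply: (squeeze_cvgr _ (cvg_lower_exponent l_ge2 p_gt0 p_lt1)
                       (cvg_upper_exponent l_ge2 p_gt0 p_lt1)).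
near=> k; apply: normalized_expectation_bounds => //.
- by near: k; exact: nbhs_infty_gt.
- by near: k; exact: nbhs_infty_ger.
Unshelve. all: by end_near.
Qed.
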